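(* Let $n\in\mathbb{N}=\{1,2,\dots\}$. Then, with $t_1<\dots<t_n$ the zeros of $H_n$, $$\|h_n\|_1=\int_{-\infty}^\infty|h_n(t)|\,dt=\frac1n\sum_{m=1}^n(-1)^{m+n}h_{n-1}(t_m);$$ with $t_1<\dots<t_{2n+1}$ the zeros of $H_{2n+1}$, $$\int_{-\infty}^\infty\frac{t^{2n}}{(2n)!}|h_{2n+1}(t)|\,dt=\frac{1}{(2n+1)!}\sum_{m=1}^{2n+1}(-1)^{m+1}\sum_{k=0}^{2n}\frac{1}{2^k}t_m^{2n-k}h_{2n-k}(t_m);$$ and with $t_1<\dots<t_{2n}$ the zeros of $H_{2n}$, $$\int_{-\infty}^\infty\frac{|t|^{2n-1}}{(2n-1)!}|h_{2n}(t)|\,dt=\frac{1}{(2n)!}\sum_{m=1}^{n}(-1)^{m+1}\sum_{k=0}^{2n-1}\frac{1}{2^k}t_m^{2n-1-k}h_{2n-1-k}(t_m)+\frac{(-1)^n}{(2n)!\,2^{2n-1}\sqrt{\pi}}+\frac{1}{(2n)!}\sum_{m=n+1}^{2n}(-1)^{m}\sum_{k=0}^{2n-1}\frac{1}{2^k}t_m^{2n-1-k}h_{2n-1-k}(t_m).$$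
   Context: $H_n$ denotes the $n$-th Hermite polynomial ($H_n(t)=(-1)^ne^{t^2}\frac{d^n}{dt^n}e^{-t^2}$), and the Hermite functions are $h_n(t)=\frac{1}{2^nn!\sqrt{\pi}}e^{-t^2}H_n(t)$, $t\in\mathbb{R}$. *)

From Stdlib Require Import Reals Arith.
From Coquelicot Require Import Coquelicot.
Open Scope R_scope.

Definition hermiteH (n : nat) (t : R) : R :=
  (-1) ^ n * exp (t ^ 2) * Derive_n (fun x => exp (- x ^ 2)) n t.

Definition hermite_fun (n : nat) (t : R) : R :=
  / (2 ^ n * INR (fact n) * sqrt PI) * exp (- t ^ 2) * hermiteH n t.

Definition zeros_enum (f : R -> R) (N : nat) (t : nat -> R) : Prop :=
  (forall i j : nat, (1 <= i)%nat -> (i < j)%nat -> (j <= N)%nat -> t i < t j) /\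
  (forall x : R, f x = 0 <-> exists m : nat, (1 <= m <= N)%nat /\ x = t m).

Definition is_integral_R (f : R -> R) (v : R) : Prop :=
  is_RInt_gen f (Rbar_locally m_infty) (Rbar_locally p_infty) v.

From Stdlib Require Import Reals Arith Lra Lia Psatz.
From Coquelicot Require Import Coquelicot.
Open Scope R_scope.

(* Between consecutive zeros of H_N the sign of h_N is (-1)^(N-j): the zeros are simple,
   because H_N' = 2N H_(N-1) and consecutive Hermite polynomials have no common zero.
   Each integrand is therefore (-1)^(N-j) g on the j-th interval, where g has a
   primitive G vanishing at +-oo: G = -h_(n-1)/(2n) for h_n, by h_q' = -2(q+1) h_(q+1),
   and for the moments the sum over k of x^(M-k) h_(M-k) / 2^k.  Adding up the pieces
   gives -2 sum_j (-1)^(N-j) G(t_j).  For |t|^(2n-1) |h_(2n)| the point 0, which lies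
   between t_n and t_(n+1) because the zeros are symmetric, is added as an extra node:
   there |t|^(2n-1) changes sign while h_(2n) does not. *)

(* Coquelicot states equalities at the types of its algebraic structures, where
   [ring] and [field] do not recognise [R]. *)
Ltac as_R_eq := match goal with |- @eq _ ?a ?b => change (@eq R a b) end.

Lemma nat_ind2 (P : nat -> Prop) :
  P 0%nat -> P 1%nat -> (forall n, P n -> P (S n) -> P (S (S n))) -> forall n, P n.
Proof.
  intros H0 H1 HS n. enough (P n /\ P (S n)) by tauto.
  induction n as [|n [IHn IHSn]]; auto.
Qed.

Lemma pow_m1_S m : (-1) ^ S m = - (-1) ^ m.
Proof. simpl; ring. Qed.

Lemma pow_m1_add_even a b : (-1) ^ (a + 2 * b) = (-1) ^ a.
Proof. rewrite pow_add, pow_1_even. ring. Qed.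

Lemma pow_m1_sub n j : (j <= n)%nat -> (-1) ^ (n - j) = (-1) ^ (j + n).
Proof.
  intro H. replace (j + n)%nat with ((n - j) + 2 * j)%nat by lia.
  symmetry; apply pow_m1_add_even.
Qed.

Lemma sum_n_m_Rmult_l c (a : nat -> R) n m :
  sum_n_m (fun k => c * a k) n m = c * sum_n_m a n m.
Proof. apply (sum_n_m_mult_l (K := R_Ring)). Qed.

(** * Hermite polynomials and functions *)

Fixpoint hermite_rec (n : nat) (x : R) : R :=
  match n with
  | O => 1
  | S k => match k with
           | O => 2 * x
           | S j => 2 * x * hermite_rec k x - 2 * INR k * hermite_rec j x
           end
  end.

Lemma hermite_rec_0 x : hermite_rec 0 x = 1.
Proof. reflexivity. Qed.

Lemma hermite_rec_1 x : hermite_rec 1 x = 2 * x.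
Proof. reflexivity. Qed.

Lemma hermite_rec_SS n x :
  hermite_rec (S (S n)) x = 2 * x * hermite_rec (S n) x - 2 * INR (S n) * hermite_rec n x.
Proof. reflexivity. Qed.

Lemma is_derive_hermite_rec n (x : R) :
  is_derive (hermite_rec (S n)) x (2 * INR (S n) * hermite_rec n x).
Proof.
  revert x; induction n using nat_ind2; intro x.
  - apply (is_derive_ext (fun y => 2 * y)); [reflexivity|].
    auto_derive; [easy|]. rewrite hermite_rec_0; simpl; ring.
  - apply (is_derive_ext (fun y => 2 * y * (2 * y) - 2 * 1 * 1)); [reflexivity|].
    auto_derive; [easy|]. rewrite hermite_rec_1; simpl; ring.
  - apply (is_derive_ext (fun y => 2 * (y * hermite_rec (S (S n)) y)
                                   - 2 * INR (S (S n)) * hermite_rec (S n) y)).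
    { intro y; as_R_eq; rewrite (hermite_rec_SS (S n)); ring. }
    replace (2 * INR (S (S (S n))) * hermite_rec (S (S n)) x)
      with (2 * (1 * hermite_rec (S (S n)) x + x * (2 * INR (S (S n)) * hermite_rec (S n) x))
            - 2 * INR (S (S n)) * (2 * INR (S n) * hermite_rec n x))
      by (rewrite !hermite_rec_SS, !S_INR; ring).
    apply (is_derive_minus (K := R_AbsRing) (fun y => 2 * (y * hermite_rec (S (S n)) y)));
      apply is_derive_scal; auto.
    apply (is_derive_mult (K := R_AbsRing) (fun y => y)); auto using is_derive_id, Rmult_comm.
Qed.

Lemma is_derive_gauss_hermite_rec n (x : R) :
  is_derive (fun y => exp (- y ^ 2) * hermite_rec n y) x
    (- (exp (- x ^ 2) * hermite_rec (S n) x)).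
Proof.
  destruct n as [|n].
  - apply (is_derive_ext (fun y => exp (- y ^ 2))).
    { intro y; rewrite hermite_rec_0; as_R_eq; ring. }
    auto_derive; [easy|]. rewrite hermite_rec_1; simpl; ring.
  - replace (- (exp (- x ^ 2) * hermite_rec (S (S n)) x))
      with (-2 * x * exp (- x ^ 2) * hermite_rec (S n) x
            + exp (- x ^ 2) * (2 * INR (S n) * hermite_rec n x))
      by (rewrite hermite_rec_SS; ring).
    apply (is_derive_mult (K := R_AbsRing) (fun y => exp (- y ^ 2)));
      auto using is_derive_hermite_rec, Rmult_comm.
    auto_derive; [easy|]. simpl; ring.
Qed.

Lemma Derive_n_gauss n x :
  Derive_n (fun y => exp (- y ^ 2)) n x = (-1) ^ n * (exp (- x ^ 2) * hermite_rec n x).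
Proof.
  revert x; induction n as [|n IH]; intro x.
  - rewrite hermite_rec_0; simpl; ring.
  - simpl Derive_n. rewrite (Derive_ext _ _ _ IH).
    apply is_derive_unique.
    replace ((-1) ^ S n * (exp (- x ^ 2) * hermite_rec (S n) x))
      with ((-1) ^ n * (- (exp (- x ^ 2) * hermite_rec (S n) x))) by (simpl; ring).
    apply is_derive_scal, is_derive_gauss_hermite_rec.
Qed.

Lemma hermiteH_rec n t : hermiteH n t = hermite_rec n t.
Proof.
  unfold hermiteH. rewrite Derive_n_gauss.
  replace ((-1) ^ n * exp (t ^ 2) * ((-1) ^ n * (exp (- t ^ 2) * hermite_rec n t)))
    with (((-1) * (-1)) ^ n * exp (t ^ 2 + - t ^ 2) * hermite_rec n t)
    by (rewrite Rpow_mult_distr, exp_plus; ring).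
  replace ((-1) * (-1)) with 1 by ring. replace (t ^ 2 + - t ^ 2) with 0 by ring.
  rewrite pow1, exp_0; ring.
Qed.

Definition hermite_norm (n : nat) : R := / (2 ^ n * INR (fact n) * sqrt PI).

Lemma sqrt_PI_gt0 : 0 < sqrt PI.
Proof. apply sqrt_lt_R0, PI_RGT_0. Qed.

Lemma hermite_norm_gt0 n : 0 < hermite_norm n.
Proof.
  apply Rinv_0_lt_compat, Rmult_lt_0_compat; [apply Rmult_lt_0_compat|].
  - apply pow_lt; lra.
  - apply lt_0_INR, lt_O_fact.
  - apply sqrt_PI_gt0.
Qed.

Lemma hermite_norm_S q : hermite_norm q = 2 * INR (S q) * hermite_norm (S q).
Proof.
  unfold hermite_norm. rewrite fact_simpl, mult_INR. simpl pow.
  pose proof sqrt_PI_gt0. pose proof (INR_fact_neq_0 q). pose proof (pow_lt 2 q ltac:(lra)).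
  assert (INR (S q) <> 0) by (apply not_0_INR; lia).
  field. repeat split; lra.
Qed.

Lemma hermite_fun_rec n t :
  hermite_fun n t = hermite_norm n * (exp (- t ^ 2) * hermite_rec n t).
Proof. unfold hermite_fun, hermite_norm. rewrite hermiteH_rec. ring. Qed.

Lemma is_derive_hermite_fun q (x : R) :
  is_derive (hermite_fun q) x (-2 * INR (S q) * hermite_fun (S q) x).
Proof.
  apply (is_derive_ext (fun y => hermite_norm q * (exp (- y ^ 2) * hermite_rec q y))).
  { intro y; rewrite hermite_fun_rec; reflexivity. }
  replace (-2 * INR (S q) * hermite_fun (S q) x)
    with (hermite_norm q * - (exp (- x ^ 2) * hermite_rec (S q) x))
    by (rewrite hermite_fun_rec, hermite_norm_S; ring).
  apply is_derive_scal, is_derive_gauss_hermite_rec.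
Qed.

Lemma continuous_hermite_fun q x : continuous (hermite_fun q) x.
Proof. apply (ex_derive_continuous (hermite_fun q)). eexists; apply is_derive_hermite_fun. Qed.

Lemma hermite_rec_no_common_zero n t : hermite_rec (S n) t = 0 -> hermite_rec n t <> 0.
Proof.
  revert t; induction n as [|n IH]; intros t H1 H0.
  - rewrite hermite_rec_0 in H0; lra.
  - apply (IH t H0). rewrite hermite_rec_SS, H0 in H1.
    assert (INR (S n) > 0) by (apply lt_0_INR; lia). nra.
Qed.

Lemma hermite_rec_ge1 k x : INR k + 1 <= x -> 1 <= hermite_rec k x <= hermite_rec (S k) x.
Proof.
  revert x; induction k as [|k IH]; intros x Hx.
  - rewrite hermite_rec_0, hermite_rec_1. simpl in Hx. lra.
  - rewrite S_INR in Hx. destruct (IH x) as [H1 H2]; [lra|].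
    rewrite hermite_rec_SS, S_INR.
    assert (0 <= INR k) by apply pos_INR. split; nra.
Qed.

Lemma hermite_rec_opp n x : hermite_rec n (- x) = (-1) ^ n * hermite_rec n x.
Proof.
  induction n as [| |n IHn IHSn] using nat_ind2.
  - rewrite !hermite_rec_0; ring.
  - rewrite !hermite_rec_1; ring.
  - rewrite !hermite_rec_SS, IHn, IHSn. simpl; ring.
Qed.

Lemma Rabs_le_1_plus_sqr x : Rabs x <= 1 + x ^ 2.
Proof. destruct (Rle_dec 0 x); [rewrite Rabs_right | rewrite Rabs_left]; nra. Qed.

Lemma hermite_rec_bound n :
  exists C, 0 <= C /\ forall x, Rabs (hermite_rec n x) <= C * (1 + x ^ 2) ^ n.
Proof.
  induction n as [| |n [C0 [HC0 H0]] [C1 [HC1 H1]]] using nat_ind2.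
  - exists 1. split; [lra|]. intro x. rewrite hermite_rec_0, Rabs_R1. simpl; lra.
  - exists 2. split; [lra|]. intro x. rewrite hermite_rec_1, Rabs_mult, Rabs_right by lra.
    pose proof (Rabs_le_1_plus_sqr x). simpl; lra.
  - assert (HN : 0 <= INR (S n)) by apply pos_INR.
    exists (2 * C1 + 2 * INR (S n) * C0). split; [nra|]. intro x.
    set (y := 1 + x ^ 2). assert (Hy : 1 <= y) by (unfold y; nra).
    assert (Hx : Rabs x <= y) by apply Rabs_le_1_plus_sqr.
    specialize (H0 x). specialize (H1 x). fold y in H0, H1.
    assert (A1 : Rabs x * Rabs (hermite_rec (S n) x) <= y * (C1 * y ^ S n))
      by (apply Rmult_le_compat; auto using Rabs_pos).
    assert (A2 : Rabs (hermite_rec n x) <= C0 * y ^ S (S n)).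
    { eapply Rle_trans; [apply H0|]. apply Rmult_le_compat_l; auto. apply Rle_pow; auto. }
    rewrite hermite_rec_SS. eapply Rle_trans; [apply Rabs_triang|].
    rewrite Rabs_Ropp, !Rabs_mult, (Rabs_right 2), (Rabs_right (INR (S n))) by lra.
    replace (y ^ S (S n)) with (y * y ^ S n) in * by (simpl; ring).
    nra.
Qed.

(** * Gaussian decay *)

Lemma pow_div_fact_le_exp n x : 0 <= x -> x ^ n / INR (fact n) <= exp x.
Proof.
  intro Hx. eapply Rle_trans; [|apply (exp_ge_taylor x n Hx)].
  destruct n as [|n]; [simpl; lra|]. rewrite tech5.
  enough (0 <= sum_f_R0 (fun k => x ^ k / INR (fact k)) n) by lra.
  apply cond_pos_sum. intro k. apply Rdiv_le_0_compat; [apply pow_le; lra|].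
  apply lt_0_INR, lt_O_fact.
Qed.

Lemma poly_gauss_le K x :
  (1 + x ^ 2) ^ K * exp (- x ^ 2) <= exp 1 * INR (fact (S K)) / (1 + x ^ 2).
Proof.
  set (y := 1 + x ^ 2). assert (Hy : 1 <= y) by (unfold y; nra).
  replace (- x ^ 2) with (1 + - y) by (unfold y; ring). rewrite exp_plus, exp_Ropp.
  pose proof (pow_div_fact_le_exp (S K) y ltac:(lra)) as He.
  pose proof (lt_0_INR _ (lt_O_fact (S K))) as Hf.
  pose proof (exp_pos y). pose proof (exp_pos 1).
  apply (Rmult_le_reg_r (y * exp y / exp 1 / INR (fact (S K)))).
  { repeat apply Rdiv_lt_0_compat; nra. }
  replace (y ^ K * (exp 1 * / exp y) * (y * exp y / exp 1 / INR (fact (S K))))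
    with (y ^ S K / INR (fact (S K))) by (rewrite <- tech_pow_Rmult; field; repeat split; lra).
  replace (exp 1 * INR (fact (S K)) / y * (y * exp y / exp 1 / INR (fact (S K))))
    with (exp y) by (field; repeat split; lra).
  exact He.
Qed.

Definition gauss_dominated (G : R -> R) : Prop :=
  exists C K, 0 <= C /\ forall x, Rabs (G x) <= C * (1 + x ^ 2) ^ K * exp (- x ^ 2).

Lemma gauss_dominated_lim G : gauss_dominated G ->
  filterlim G (Rbar_locally m_infty) (locally 0) /\ filterlim G (Rbar_locally p_infty) (locally 0).
Proof.
  intros [C [K [HC HG]]].
  set (B := C * (exp 1 * INR (fact (S K)))).
  assert (HB : 0 <= B).
  { apply Rmult_le_pos; auto. pose proof (exp_pos 1).
    pose proof (lt_0_INR _ (lt_O_fact (S K))). nra. }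
  assert (Hsmall : forall eps : posreal, forall x, B / eps + 1 <= Rabs x -> ball 0 eps (G x)).
  { intros eps x Hx. pose proof (cond_pos eps).
    assert (Hx2 : B / eps < x ^ 2) by (rewrite <- (pow2_abs x); nra).
    assert (HB2 : B < eps * x ^ 2).
    { replace B with (eps * (B / eps)) at 1 by (field; lra). apply Rmult_lt_compat_l; lra. }
    change (Rabs (G x - 0) < eps). rewrite Rminus_0_r.
    eapply Rle_lt_trans; [apply HG|]. rewrite Rmult_assoc.
    eapply Rle_lt_trans; [apply Rmult_le_compat_l, poly_gauss_le; auto|].
    replace (C * (exp 1 * INR (fact (S K)) / (1 + x ^ 2))) with (B / (1 + x ^ 2))
      by (unfold B, Rdiv; ring).
    apply (Rmult_lt_reg_r (1 + x ^ 2)); [nra|].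
    unfold Rdiv. rewrite Rmult_assoc, Rinv_l by nra. nra. }
  split; apply filterlim_locally; intro eps; pose proof (cond_pos eps);
    assert (0 <= B / eps) by (apply Rdiv_le_0_compat; lra).
  - exists (- (B / eps + 1)). intros x Hx. apply Hsmall. rewrite Rabs_left; lra.
  - exists (B / eps + 1). intros x Hx. apply Hsmall. rewrite Rabs_right; lra.
Qed.

Lemma gauss_dominated_ext F G : (forall x, F x = G x) -> gauss_dominated F -> gauss_dominated G.
Proof. intros H [C [K [HC HF]]]. exists C, K. split; auto. intro x. rewrite <- H. apply HF. Qed.

Lemma gauss_dominated_scal c F : gauss_dominated F -> gauss_dominated (fun x => c * F x).
Proof.
  intros [C [K [H HF]]]. exists (Rabs c * C), K. split; [apply Rmult_le_pos; auto using Rabs_pos|].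
  intro x. rewrite Rabs_mult, !Rmult_assoc. apply Rmult_le_compat_l; [apply Rabs_pos|].
  rewrite <- Rmult_assoc. apply HF.
Qed.

Lemma gauss_dominated_plus F G :
  gauss_dominated F -> gauss_dominated G -> gauss_dominated (fun x => F x + G x).
Proof.
  intros [C1 [K1 [H1 HF]]] [C2 [K2 [H2 HG]]]. exists (C1 + C2), (K1 + K2)%nat. split; [lra|].
  intro x. eapply Rle_trans; [apply Rabs_triang|].
  assert (Hy : 1 <= 1 + x ^ 2) by nra.
  pose proof (Rle_pow _ K1 (K1 + K2) Hy ltac:(lia)).
  pose proof (Rle_pow _ K2 (K1 + K2) Hy ltac:(lia)).
  pose proof (HF x). pose proof (HG x). pose proof (exp_pos (- x ^ 2)).
  assert (C1 * (1 + x ^ 2) ^ K1 <= C1 * (1 + x ^ 2) ^ (K1 + K2)) by (apply Rmult_le_compat_l; lra).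
  assert (C2 * (1 + x ^ 2) ^ K2 <= C2 * (1 + x ^ 2) ^ (K1 + K2)) by (apply Rmult_le_compat_l; lra).
  nra.
Qed.

Lemma gauss_dominated_pow_hermite_fun p q : gauss_dominated (fun x => x ^ p * hermite_fun q x).
Proof.
  destruct (hermite_rec_bound q) as [C [HC HQ]].
  pose proof (hermite_norm_gt0 q).
  exists (hermite_norm q * C), (p + q)%nat. split; [nra|].
  intro x. rewrite hermite_fun_rec, pow_add, !Rabs_mult.
  pose proof (exp_pos (- x ^ 2)).
  rewrite (Rabs_right (hermite_norm q)), (Rabs_right (exp _)) by lra.
  assert (Hp : Rabs (x ^ p) <= (1 + x ^ 2) ^ p).
  { rewrite <- RPow_abs. apply pow_incr. split; [apply Rabs_pos|apply Rabs_le_1_plus_sqr]. }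
  assert (Rabs (x ^ p) * Rabs (hermite_rec q x) <= (1 + x ^ 2) ^ p * (C * (1 + x ^ 2) ^ q))
    by (apply Rmult_le_compat; auto using Rabs_pos).
  pose proof (exp_pos (- x ^ 2)).
  replace (Rabs (x ^ p) * (hermite_norm q * (exp (- x ^ 2) * Rabs (hermite_rec q x))))
    with (hermite_norm q * exp (- x ^ 2) * (Rabs (x ^ p) * Rabs (hermite_rec q x))) by ring.
  replace (hermite_norm q * C * ((1 + x ^ 2) ^ p * (1 + x ^ 2) ^ q) * exp (- x ^ 2))
    with (hermite_norm q * exp (- x ^ 2) * ((1 + x ^ 2) ^ p * (C * (1 + x ^ 2) ^ q))) by ring.
  apply Rmult_le_compat_l; nra.
Qed.

(** * Integrals of alternating piecewise functions *)

Lemma is_RInt_gen_scal_antiderivative (Fa Fb : (R -> Prop) -> Prop) {FFa : Filter Fa}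
  {FFb : Filter Fb} (F G g : R -> R) (s la lb : R) :
  (forall x, is_derive G x (g x)) -> (forall x, continuous g x) ->
  filterlim G Fa (locally la) -> filterlim G Fb (locally lb) ->
  filter_prod Fa Fb (fun ab => forall x, Rmin (fst ab) (snd ab) < x < Rmax (fst ab) (snd ab) ->
                                  F x = s * g x) ->
  is_RInt_gen F Fa Fb (s * (lb - la)).
Proof.
  intros HG Hg Ha Hb HF.
  assert (HD : forall x, Derive G x = g x) by (intro x; apply is_derive_unique, HG).
  assert (Hg' : is_RInt_gen g Fa Fb (lb - la)).
  { apply (is_RInt_gen_ext (Derive G)); [apply filter_forall; intros ab x _; apply HD|].
    apply is_RInt_gen_Derive; auto; apply filter_forall; intros ab x _.
    - eexists; apply HG.
    - apply (continuous_ext g); auto. }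
  apply (is_RInt_gen_ext (fun x => scal s (g x))); [|apply (is_RInt_gen_scal _ s _ Hg')].
  eapply filter_imp; [|exact HF]. intros ab H x Hx. symmetry; apply H, Hx.
Qed.

Lemma filterlim_at_point (G : R -> R) a : filterlim G (at_point a) (locally (G a)).
Proof. apply filterlim_locally. intro eps. apply ball_center. Qed.

(* Interval [j] of the partition of [R] by the nodes [p 1 < ... < p K]; interval [0]
   is [(-oo, p 1)] and interval [K] is [(p K, +oo)]. *)
Definition node_interval (K : nat) (p : nat -> R) (j : nat) (x : R) : Prop :=
  (j = 0%nat \/ p j < x) /\ (j = K \/ x < p (S j)).

Section AlternatingIntegral.

Variables (K : nat) (p : nat -> R) (F G g : R -> R).
Hypothesis p_incr : forall i j, (1 <= i)%nat -> (i < j)%nat -> (j <= K)%nat -> p i < p j.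
Hypothesis G_deriv : forall x, is_derive G x (g x).
Hypothesis g_cont : forall x, continuous g x.
Hypothesis G_lim_m_infty : filterlim G (Rbar_locally m_infty) (locally 0).
Hypothesis G_lim_p_infty : filterlim G (Rbar_locally p_infty) (locally 0).
Hypothesis F_alt : forall j x, (j <= K)%nat -> node_interval K p j x -> F x = (-1) ^ (K - j) * g x.

Lemma is_RInt_gen_alternating_piece j :
  (1 <= j)%nat -> (S j <= K)%nat ->
  is_RInt_gen F (at_point (p j)) (at_point (p (S j)))
    ((-1) ^ (K - j) * (G (p (S j)) - G (p j))).
Proof.
  intros Hj HjK. assert (Hlt : p j < p (S j)) by (apply p_incr; lia).
  apply (is_RInt_gen_scal_antiderivative _ _ F G g); auto using filterlim_at_point.
  exists (fun a => a = p j) (fun b => b = p (S j)); try reflexivity.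
  intros a b -> -> x Hx. simpl in Hx. rewrite Rmin_left, Rmax_right in Hx by lra.
  apply F_alt; [lia|]. split; right; lra.
Qed.

Lemma is_RInt_gen_alternating_prefix j : (S j <= K)%nat ->
  is_RInt_gen F (Rbar_locally m_infty) (at_point (p (S j)))
    (-2 * sum_n_m (fun i => (-1) ^ (K - i) * G (p i)) 1 j - (-1) ^ (K - S j) * G (p (S j))).
Proof.
  induction j as [|j IH]; intro Hj.
  - rewrite sum_n_m_zero by lia.
    replace (-2 * zero - (-1) ^ (K - 1) * G (p 1%nat))
      with ((-1) ^ (K - 0) * (G (p 1%nat) - 0))
      by (replace (K - 0)%nat with (S (K - 1)) by lia; rewrite pow_m1_S; as_R_eq;
          change (zero : R) with 0; ring).
    apply (is_RInt_gen_scal_antiderivative _ _ F G g); auto using filterlim_at_point.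
    exists (fun a => a < p 1%nat) (fun b => b = p 1%nat); [exists (p 1%nat); auto|reflexivity|].
    intros a b Ha -> x Hx. simpl in Hx. rewrite Rmin_left, Rmax_right in Hx by lra.
    apply F_alt; [lia|]. split; [left|right]; auto; lra.
  - specialize (IH ltac:(lia)).
    pose proof (is_RInt_gen_alternating_piece (S j) ltac:(lia) Hj) as Hpiece.
    pose proof (is_RInt_gen_Chasles _ _ _ _ IH Hpiece) as H.
    rewrite sum_n_Sm by lia.
    replace (K - S j)%nat with (S (K - S (S j))) in * by lia. rewrite pow_m1_S in *.
    change plus with Rplus in *.
    replace (-2 * (sum_n_m (fun i => (-1) ^ (K - i) * G (p i)) 1 j
                   + (- (-1) ^ (K - S (S j))) * G (p (S j)))
             - (-1) ^ (K - S (S j)) * G (p (S (S j))))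
      with (-2 * sum_n_m (fun i => (-1) ^ (K - i) * G (p i)) 1 j
            - - (-1) ^ (K - S (S j)) * G (p (S j))
            + - (-1) ^ (K - S (S j)) * (G (p (S (S j))) - G (p (S j)))) by ring.
    exact H.
Qed.

(* Each node ends one piece and starts the next with the opposite sign, hence [-2]. *)
Lemma is_integral_R_alternating : (1 <= K)%nat ->
  is_integral_R F (-2 * sum_n_m (fun j => (-1) ^ (K - j) * G (p j)) 1 K).
Proof.
  intro HK.
  assert (Htail : is_RInt_gen F (at_point (p K)) (Rbar_locally p_infty)
                    ((-1) ^ (K - K) * (0 - G (p K)))).
  { apply (is_RInt_gen_scal_antiderivative _ _ F G g); auto using filterlim_at_point.
    exists (fun a => a = p K) (fun b => p K < b); [reflexivity|exists (p K); auto|].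
    intros a b -> Hb x Hx. simpl in Hx. rewrite Rmin_left, Rmax_right in Hx by lra.
    apply F_alt; [lia|]. split; [right|left]; auto; lra. }
  pose proof (is_RInt_gen_alternating_prefix (pred K) ltac:(lia)) as Hhead.
  rewrite Nat.succ_pred_pos in Hhead by lia.
  pose proof (is_RInt_gen_Chasles _ _ _ _ Hhead Htail) as H.
  assert (Hsum : forall u : nat -> R, sum_n_m u 1 K = sum_n_m u 1 (pred K) + u K).
  { intro u. clear -HK. destruct K as [|K']; [lia|].
    simpl pred. rewrite sum_n_Sm by lia. reflexivity. }
  unfold is_integral_R. rewrite Hsum, Nat.sub_diag, pow_O.
  rewrite Nat.sub_diag, pow_O in H. change plus with Rplus in H.
  replace (-2 * (sum_n_m (fun j => (-1) ^ (K - j) * G (p j)) 1 (pred K) + 1 * G (p K)))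
    with (-2 * sum_n_m (fun j => (-1) ^ (K - j) * G (p j)) 1 (pred K) - 1 * G (p K)
          + 1 * (0 - G (p K))) by ring.
  exact H.
Qed.

End AlternatingIntegral.

(** * Signs between simple zeros *)

Lemma exists_root_between (f : R -> R) x y : continuity f -> f x * f y <= 0 ->
  exists z, Rmin x y <= z <= Rmax x y /\ f z = 0.
Proof.
  intros Hf Hxy. destruct (Rle_dec x y) as [Hle|Hgt].
  - destruct (IVT_cor f x y Hf Hle Hxy) as [z Hz].
    exists z. rewrite Rmin_left, Rmax_right; tauto.
  - destruct (IVT_cor f y x Hf ltac:(lra) ltac:(lra)) as [z Hz].
    exists z. rewrite Rmin_right, Rmax_left by lra. tauto.
Qed.

Lemma simple_zero_local_sign (P : R -> R) c d : is_derive P c d -> P c = 0 -> d <> 0 ->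
  exists del, 0 < del /\ forall h, 0 < Rabs h < del -> P (c + h) * h * d > 0.
Proof.
  intros HD H0 Hd. rewrite is_derive_Reals in HD.
  assert (Hpos : 0 < Rabs d) by (apply Rabs_pos_lt; auto).
  destruct (HD (Rabs d) Hpos) as [del Hdel].
  exists del. split; [apply cond_pos|]. intros h [Hh1 Hh2].
  assert (Hh : h <> 0) by (intro; subst; rewrite Rabs_R0 in Hh1; lra).
  specialize (Hdel h Hh Hh2). rewrite H0, Rminus_0_r in Hdel.
  set (u := P (c + h) / h) in *.
  assert (Hu : u * d > 0).
  { destruct (Rle_dec 0 d);
      [rewrite (Rabs_right d) in Hpos, Hdel by lra | rewrite (Rabs_left d) in Hpos, Hdel by lra];
      apply Rabs_def2 in Hdel; nra. }
  replace (P (c + h)) with (u * h) by (unfold u; field; auto).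
  assert (h * h > 0) by nra. nra.
Qed.

Lemma node_interval_convex K p j x y z : node_interval K p j x -> node_interval K p j y ->
  Rmin x y <= z <= Rmax x y -> node_interval K p j z.
Proof.
  intros [[H1|H1] [H2|H2]] [[H3|H3] [H4|H4]] Hz; unfold node_interval;
  pose proof (Rmin_l x y); pose proof (Rmin_r x y); pose proof (Rmax_l x y);
  pose proof (Rmax_r x y); unfold Rmin, Rmax in *; repeat destruct Rle_dec; split; auto; lra.
Qed.

Lemma strict_incr_le N (t : nat -> R) :
  (forall i j, (1 <= i)%nat -> (i < j)%nat -> (j <= N)%nat -> t i < t j) ->
  forall i j, (1 <= i)%nat -> (i <= j)%nat -> (j <= N)%nat -> t i <= t j.
Proof. intros H i j **. destruct (Nat.eq_dec i j) as [->|]; [lra|]. left; apply H; lia. Qed.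

Section SignsBetweenZeros.

Variables (N : nat) (t : nat -> R) (P : R -> R).
Hypothesis P_zeros : zeros_enum P N t.
Hypothesis P_cont : continuity P.

Lemma node_interval_no_zero j x : (j <= N)%nat -> node_interval N t j x -> P x <> 0.
Proof.
  intros Hj [HL HR] HP. apply (proj2 P_zeros) in HP. destruct HP as [m [Hm ->]].
  destruct (le_lt_dec m j).
  - destruct HL as [HL|HL]; [lia|].
    pose proof (strict_incr_le N t (proj1 P_zeros) m j ltac:(lia) ltac:(lia) ltac:(lia)). lra.
  - destruct HR as [HR|HR]; [lia|].
    pose proof (strict_incr_le N t (proj1 P_zeros) (S j) m ltac:(lia) ltac:(lia) ltac:(lia)). lra.
Qed.

Lemma node_interval_sign_const j s x y : (j <= N)%nat ->
  node_interval N t j x -> node_interval N t j y -> s * P y > 0 -> s * P x > 0.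
Proof.
  intros Hj Hx Hy Hs.
  pose proof (node_interval_no_zero j x Hj Hx).
  destruct (Rlt_dec 0 (s * P x)) as [|Hle]; [lra|].
  destruct (exists_root_between P x y P_cont) as [z [Hz Hz0]]; [nra|].
  exfalso. apply (node_interval_no_zero j z Hj); auto.
  exact (node_interval_convex N t j x y z Hx Hy Hz).
Qed.

Lemma node_interval_near_node j : (j < N)%nat -> exists r, 0 < r /\ forall h, 0 < h < r ->
  node_interval N t j (t (S j) - h) /\ node_interval N t (S j) (t (S j) + h).
Proof.
  intro Hj. destruct P_zeros as [Hinc _].
  assert (HL : exists rL, 0 < rL /\ forall h, 0 < h < rL -> j = 0%nat \/ t j < t (S j) - h).
  { destruct (Nat.eq_dec j 0) as [E|E]; [exists 1; split; auto; lra|].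
    assert (t j < t (S j)) by (apply Hinc; lia).
    exists (t (S j) - t j). split; [lra|]. intros; right; lra. }
  assert (HR : exists rR, 0 < rR /\ forall h, 0 < h < rR -> S j = N \/ t (S j) + h < t (S (S j))).
  { destruct (Nat.eq_dec (S j) N) as [E|E]; [exists 1; split; auto; lra|].
    assert (t (S j) < t (S (S j))) by (apply Hinc; lia).
    exists (t (S (S j)) - t (S j)). split; [lra|]. intros; right; lra. }
  destruct HL as [rL [HrL HL]], HR as [rR [HrR HR]].
  exists (Rmin rL rR). split; [apply Rmin_glb_lt; auto|]. intros h Hh.
  pose proof (Rmin_l rL rR). pose proof (Rmin_r rL rR).
  split; split; try (right; lra); [apply HL | apply HR]; lra.
Qed.

Lemma sign_flip_at_simple_zero j s d : (j < N)%nat -> d <> 0 -> is_derive P (t (S j)) d ->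
  (forall x, node_interval N t (S j) x -> s * P x > 0) ->
  forall x, node_interval N t j x -> - s * P x > 0.
Proof.
  intros Hj Hd HD Hsign x Hx.
  set (c := t (S j)).
  assert (Hc : P c = 0) by (apply (proj2 P_zeros); exists (S j); split; [lia|reflexivity]).
  destruct (simple_zero_local_sign P c d HD Hc Hd) as [del [Hdel Hloc]].
  destruct (node_interval_near_node j Hj) as [r [Hr Hnear]].
  set (h := Rmin del r / 2).
  assert (Hh : 0 < h < del /\ h < r).
  { pose proof (Rmin_l del r). pose proof (Rmin_r del r).
    assert (0 < Rmin del r) by (apply Rmin_glb_lt; auto). unfold h; lra. }
  destruct (Hnear h ltac:(lra)) as [Hleft Hright]. fold c in Hleft, Hright.
  pose proof (Hsign _ Hright) as Hs.
  pose proof (Hloc h ltac:(rewrite Rabs_right; lra)) as L1.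
  pose proof (Hloc (- h) ltac:(rewrite Rabs_Ropp, Rabs_right; lra)) as L2.
  replace (c + - h) with (c - h) in L2 by ring.
  assert (Hprod : P (c + h) * P (c - h) < 0).
  { assert (0 < (P (c + h) * h * d) * (P (c - h) * - h * d)) by (apply Rmult_lt_0_compat; lra).
    assert (h * d <> 0) by (apply Rmult_integral_contrapositive; lra).
    assert (0 < (h * d) * (h * d)) by nra.
    nra. }
  apply (node_interval_sign_const j _ x (c - h)); [lia|auto|auto|nra].
Qed.

Lemma sign_on_node_intervals :
  (forall m, (1 <= m <= N)%nat -> exists d, d <> 0 /\ is_derive P (t m) d) ->
  (exists x0, t N < x0 /\ P x0 > 0) ->
  forall j x, (j <= N)%nat -> node_interval N t j x -> (-1) ^ (N - j) * P x > 0.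
Proof.
  intros Hsimple [x0 [Hx0 HPx0]].
  assert (Hdown : forall k, (k <= N)%nat ->
            forall x, node_interval N t (N - k) x -> (-1) ^ k * P x > 0).
  { induction k as [|k IH]; intros Hk x Hx.
    - rewrite Nat.sub_0_r in Hx. rewrite pow_O.
      apply (node_interval_sign_const N 1 x x0); auto. split; [right|left]; auto.
      rewrite Rmult_1_l; lra.
    - destruct (Hsimple (N - k)%nat ltac:(lia)) as [d [Hd HD]].
      rewrite pow_m1_S.
      replace (N - k)%nat with (S (N - S k)) in HD by lia.
      apply (sign_flip_at_simple_zero (N - S k) _ d); auto; [lia|].
      intros y Hy. apply IH; [lia|]. replace (N - k)%nat with (S (N - S k)) by lia. exact Hy. }
  intros j x Hj Hx. apply Hdown; [lia|]. replace (N - (N - j))%nat with j by lia. exact Hx.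
Qed.

End SignsBetweenZeros.

Lemma continuity_hermite_rec n : continuity (hermite_rec n).
Proof.
  destruct n as [|n].
  - apply continuity_const. intros a b. rewrite !hermite_rec_0. reflexivity.
  - intro x. apply derivable_continuous_pt.
    exists (2 * INR (S n) * hermite_rec n x). apply is_derive_Reals, is_derive_hermite_rec.
Qed.

Lemma hermite_rec_sign N t : (1 <= N)%nat -> zeros_enum (hermite_rec N) N t ->
  forall j x, (j <= N)%nat -> node_interval N t j x -> (-1) ^ (N - j) * hermite_rec N x > 0.
Proof.
  intros HN HZ. destruct N as [|N']; [lia|].
  apply sign_on_node_intervals; auto using continuity_hermite_rec.
  - intros m Hm. exists (2 * INR (S N') * hermite_rec N' (t m)).
    split; [|apply is_derive_hermite_rec].
    assert (Hz : hermite_rec (S N') (t m) = 0) by (apply (proj2 HZ); exists m; auto).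
    pose proof (hermite_rec_no_common_zero N' (t m) Hz).
    assert (INR (S N') > 0) by (apply lt_0_INR; lia). intro Hz0. nra.
  - set (x0 := Rmax (t (S N')) (INR (S N')) + 1). exists x0.
    pose proof (Rmax_l (t (S N')) (INR (S N'))). pose proof (Rmax_r (t (S N')) (INR (S N'))).
    split; [unfold x0; lra|].
    pose proof (hermite_rec_ge1 (S N') x0 ltac:(unfold x0; lra)). lra.
Qed.

Lemma Rabs_hermite_fun_node_interval N t j x : (1 <= N)%nat ->
  zeros_enum (hermiteH N) N t -> (j <= N)%nat -> node_interval N t j x ->
  Rabs (hermite_fun N x) = (-1) ^ (N - j) * hermite_fun N x.
Proof.
  intros HN [Hinc Hz] Hj Hx.
  assert (HZ : zeros_enum (hermite_rec N) N t).
  { split; auto. intro y. rewrite <- hermiteH_rec. apply Hz. }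
  pose proof (hermite_rec_sign N t HN HZ j x Hj Hx).
  assert (Hpos : (-1) ^ (N - j) * hermite_fun N x > 0).
  { rewrite hermite_fun_rec.
    pose proof (hermite_norm_gt0 N). pose proof (exp_pos (- x ^ 2)).
    replace ((-1) ^ (N - j) * (hermite_norm N * (exp (- x ^ 2) * hermite_rec N x)))
      with ((hermite_norm N * exp (- x ^ 2)) * ((-1) ^ (N - j) * hermite_rec N x)) by ring.
    apply Rmult_gt_0_compat; auto. apply Rmult_gt_0_compat; auto. }
  rewrite <- (Rabs_right ((-1) ^ (N - j) * hermite_fun N x)) by lra.
  rewrite Rabs_mult, pow_1_abs. ring.
Qed.

(** * The three integrals *)

Lemma hermite_fun_L1 n t : (1 <= n)%nat -> zeros_enum (hermiteH n) n t ->
  is_integral_R (fun x => Rabs (hermite_fun n x))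
    (/ INR n * sum_n_m (fun m => (-1) ^ (m + n) * hermite_fun (n - 1) (t m)) 1 n).
Proof.
  intros Hn HZ. assert (HnR : INR n > 0) by (apply lt_0_INR; lia).
  set (G := fun x => - / (2 * INR n) * hermite_fun (n - 1) x).
  replace (/ INR n * _) with (-2 * sum_n_m (fun j => (-1) ^ (n - j) * G (t j)) 1 n).
  - assert (HG : gauss_dominated G).
    { apply gauss_dominated_scal, (gauss_dominated_ext (fun x => x ^ 0 * hermite_fun (n - 1) x));
        [intro; simpl; ring | apply gauss_dominated_pow_hermite_fun]. }
    destruct (gauss_dominated_lim G HG).
    apply (is_integral_R_alternating n t _ G (hermite_fun n)); auto using continuous_hermite_fun.
    + apply HZ.
    + intro x. unfold G.
      replace (hermite_fun n x)
        with (- / (2 * INR n) * (-2 * INR (S (n - 1)) * hermite_fun (S (n - 1)) x))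
        by (replace (S (n - 1)) with n by lia; field; lra).
      apply is_derive_scal, is_derive_hermite_fun.
    + intros j x Hj Hx. apply (Rabs_hermite_fun_node_interval n t); auto.
  - rewrite (sum_n_m_ext_loc _
      (fun j => - / (2 * INR n) * ((-1) ^ (j + n) * hermite_fun (n - 1) (t j)))).
    + rewrite sum_n_m_Rmult_l. field. lra.
    + intros k Hk. unfold G. rewrite pow_m1_sub by lia. as_R_eq. ring.
Qed.

(* Differentiating [x^M h_M] gives [M x^(M-1) h_M - 2(M+1) x^M h_(M+1)]; the first
   term is cancelled by the derivative of the previous primitive halved. *)
Fixpoint hermite_moment_prim (M : nat) (x : R) : R :=
  match M with
  | O => hermite_fun 0 x
  | S M' => x ^ S M' * hermite_fun (S M') x + hermite_moment_prim M' x / 2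
  end.

Lemma hermite_moment_prim_sum M x : hermite_moment_prim M x =
  sum_n_m (fun k => / 2 ^ k * x ^ (M - k) * hermite_fun (M - k) x) 0 M.
Proof.
  induction M as [|M IH].
  - rewrite sum_n_n. simpl; field.
  - rewrite sum_Sn_m, <- sum_n_m_S by lia.
    rewrite (sum_n_m_ext _ (fun k => / 2 * (/ 2 ^ k * x ^ (M - k) * hermite_fun (M - k) x))).
    + rewrite sum_n_m_Rmult_l, <- IH. simpl hermite_moment_prim.
      rewrite Nat.sub_0_r. change plus with Rplus.
      simpl pow. as_R_eq. field.
    + intro k. simpl. as_R_eq. field. apply pow_nonzero. lra.
Qed.

Lemma is_derive_hermite_moment_prim M (x : R) :
  is_derive (hermite_moment_prim M) x (-2 * INR (S M) * x ^ M * hermite_fun (S M) x).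
Proof.
  revert x; induction M as [|M IH]; intro x.
  - replace (-2 * INR 1 * x ^ 0 * hermite_fun 1 x) with (-2 * INR 1 * hermite_fun 1 x) by ring.
    apply is_derive_hermite_fun.
  - replace (-2 * INR (S (S M)) * x ^ S M * hermite_fun (S (S M)) x)
      with (INR (S M) * 1 * x ^ M * hermite_fun (S M) x
            + x ^ S M * (-2 * INR (S (S M)) * hermite_fun (S (S M)) x)
            + / 2 * (-2 * INR (S M) * x ^ M * hermite_fun (S M) x))
      by (rewrite (S_INR (S M)); field).
    apply (is_derive_plus (K := R_AbsRing)
             (fun y => y ^ S M * hermite_fun (S M) y) (fun y => hermite_moment_prim M y / 2)).
    + apply (is_derive_mult (K := R_AbsRing) (fun y => y ^ S M));
        auto using is_derive_hermite_fun, Rmult_comm.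
      apply (is_derive_pow (fun y => y) (S M) x 1), (is_derive_id (K := R_AbsRing)).
    + apply (is_derive_ext (fun y => / 2 * hermite_moment_prim M y));
        [intro; as_R_eq; field | apply is_derive_scal, IH].
Qed.

Lemma gauss_dominated_hermite_moment_prim M : gauss_dominated (hermite_moment_prim M).
Proof.
  induction M as [|M IH].
  - apply (gauss_dominated_ext (fun x => x ^ 0 * hermite_fun 0 x));
      [intro; simpl; ring | apply gauss_dominated_pow_hermite_fun].
  - apply (gauss_dominated_ext (fun x => x ^ S M * hermite_fun (S M) x
                                        + / 2 * hermite_moment_prim M x)).
    + intro x. cbv beta. simpl hermite_moment_prim. rewrite tech_pow_Rmult. as_R_eq. field.
    + apply gauss_dominated_plus; auto using gauss_dominated_pow_hermite_fun, gauss_dominated_scal.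
Qed.

Lemma hermite_moment_prim_0 M : hermite_moment_prim M 0 = / 2 ^ M * / sqrt PI.
Proof.
  pose proof sqrt_PI_gt0.
  induction M as [|M IH].
  - simpl hermite_moment_prim. rewrite hermite_fun_rec, hermite_rec_0.
    unfold hermite_norm. replace (- 0 ^ 2) with 0 by ring. rewrite exp_0. simpl. field. lra.
  - simpl hermite_moment_prim. rewrite IH. simpl pow. field.
    split; [lra|apply pow_nonzero; lra].
Qed.

Lemma continuous_pow_hermite_fun k c N x : continuous (fun y => y ^ k * c * hermite_fun N y) x.
Proof.
  apply (continuous_mult (K := R_AbsRing) (fun y => y ^ k * c)); [|apply continuous_hermite_fun].
  apply (continuous_mult (K := R_AbsRing) (fun y => y ^ k)); [|apply continuous_const].
  apply (ex_derive_continuous (fun y => y ^ k)). auto_derive. easy.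
Qed.

Lemma odd_moment_abs_hermite_fun n t : zeros_enum (hermiteH (2 * n + 1)) (2 * n + 1) t ->
  is_integral_R
    (fun x => x ^ (2 * n) / INR (fact (2 * n)) * Rabs (hermite_fun (2 * n + 1) x))
    (/ INR (fact (2 * n + 1)) *
     sum_n_m (fun m => (-1) ^ (m + 1) *
       sum_n_m (fun k => / 2 ^ k * t m ^ (2 * n - k) * hermite_fun (2 * n - k) (t m))
         0 (2 * n)) 1 (2 * n + 1)).
Proof.
  intro HZ. set (N := (2 * n + 1)%nat) in *.
  assert (HfN : INR (fact N) = INR N * INR (fact (2 * n))).
  { unfold N. rewrite Nat.add_1_r, fact_simpl, mult_INR. reflexivity. }
  assert (HNR : INR N > 0) by (apply lt_0_INR; unfold N; lia).
  pose proof (INR_fact_neq_0 (2 * n)).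
  set (G := fun x => - / (2 * INR (fact N)) * hermite_moment_prim (2 * n) x).
  replace (/ INR (fact N) * _) with (-2 * sum_n_m (fun j => (-1) ^ (N - j) * G (t j)) 1 N).
  - assert (HG : gauss_dominated G)
      by apply gauss_dominated_scal, gauss_dominated_hermite_moment_prim.
    destruct (gauss_dominated_lim G HG).
    apply (is_integral_R_alternating N t _ G
             (fun x => x ^ (2 * n) * / INR (fact (2 * n)) * hermite_fun N x));
      auto using continuous_pow_hermite_fun; [apply HZ| | |unfold N; lia].
    + intro x. unfold G.
      replace (x ^ (2 * n) * / INR (fact (2 * n)) * hermite_fun N x)
        with (- / (2 * INR (fact N)) *
              (-2 * INR (S (2 * n)) * x ^ (2 * n) * hermite_fun (S (2 * n)) x))
        by (rewrite HfN; replace (S (2 * n)) with N by (unfold N; lia); field; lra).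
      apply is_derive_scal, is_derive_hermite_moment_prim.
    + intros j x Hj Hx. rewrite (Rabs_hermite_fun_node_interval N t j x); auto; [|unfold N; lia].
      unfold Rdiv; ring.
  - rewrite (sum_n_m_ext_loc _ (fun j => - / (2 * INR (fact N)) * ((-1) ^ (j + 1) *
      sum_n_m (fun k => / 2 ^ k * t j ^ (2 * n - k) * hermite_fun (2 * n - k) (t j)) 0 (2 * n)))).
    + rewrite sum_n_m_Rmult_l. field. rewrite HfN. apply Rmult_integral_contrapositive; lra.
    + intros k Hk. unfold G. rewrite hermite_moment_prim_sum, pow_m1_sub by lia.
      replace (k + N)%nat with ((k + 1) + 2 * n)%nat by (unfold N; lia).
      rewrite pow_m1_add_even. as_R_eq. ring.
Qed.

Section SymmetricZeros.

Variables (n : nat) (t : nat -> R) (P : R -> R).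
Hypothesis P_zeros : zeros_enum P (2 * n) t.
Hypothesis P_zero_opp : forall x, P x = 0 -> P (- x) = 0.

Lemma zeros_enum_opp m : (1 <= m <= 2 * n)%nat ->
  exists m', (1 <= m' <= 2 * n)%nat /\ t m' = - t m.
Proof.
  intro Hm. assert (Hopp : P (- t m) = 0)
    by (apply P_zero_opp, (proj2 P_zeros); exists m; auto).
  apply (proj2 P_zeros) in Hopp. destruct Hopp as [m' [Hm' E]]. exists m'. auto.
Qed.

Lemma zeros_enum_index_lt a b : (1 <= a <= 2 * n)%nat -> (1 <= b <= 2 * n)%nat ->
  t a < t b -> (a < b)%nat.
Proof.
  intros Ha Hb H. destruct (le_lt_dec b a); auto.
  pose proof (strict_incr_le (2 * n) t (proj1 P_zeros) b a ltac:(lia) ltac:(lia) ltac:(lia)). lra.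
Qed.

Lemma zeros_enum_opp_index_le k m' : (S k <= 2 * n)%nat -> (1 <= m' <= 2 * n)%nat ->
  t m' = - t (S k) -> (m' <= 2 * n - k)%nat.
Proof.
  revert m'; induction k as [|k IH]; intros m' Hk Hm' E; [lia|].
  destruct (zeros_enum_opp (S k) ltac:(lia)) as [m'' [Hm'' E'']].
  specialize (IH m'' ltac:(lia) Hm'' E'').
  assert (t (S k) < t (S (S k))) by (apply (proj1 P_zeros); lia).
  pose proof (zeros_enum_index_lt m' m'' Hm' Hm'' ltac:(lra)). lia.
Qed.

Lemma zeros_enum_opp_index_ge k m' : (k < 2 * n)%nat -> (1 <= m' <= 2 * n)%nat ->
  t m' = - t (2 * n - k)%nat -> (k + 1 <= m')%nat.
Proof.
  revert m'; induction k as [|k IH]; intros m' Hk Hm' E; [lia|].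
  destruct (zeros_enum_opp (2 * n - k)%nat ltac:(lia)) as [m'' [Hm'' E'']].
  specialize (IH m'' ltac:(lia) Hm'' E'').
  assert (t (2 * n - S k)%nat < t (2 * n - k)%nat) by (apply (proj1 P_zeros); lia).
  pose proof (zeros_enum_index_lt m'' m' Hm'' Hm' ltac:(lra)). lia.
Qed.

(* The reflection x -> -x reverses the enumeration, so it pairs [t n] with [t (S n)]. *)
Lemma zeros_enum_straddle_0 : (1 <= n)%nat -> t n < 0 < t (S n).
Proof.
  intro Hn. destruct (zeros_enum_opp n ltac:(lia)) as [m' [Hm' E]].
  pose proof (zeros_enum_opp_index_le (n - 1) m' ltac:(lia) Hm') as Hle.
  replace (S (n - 1)) with n in Hle by lia.
  pose proof (zeros_enum_opp_index_ge n m' ltac:(lia) Hm') as Hge.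
  replace (2 * n - n)%nat with n in Hge by lia.
  specialize (Hle E). specialize (Hge E).
  replace m' with (S n) in E by lia.
  assert (t n < t (S n)) by (apply (proj1 P_zeros); lia). lra.
Qed.

End SymmetricZeros.

Definition insert_node (n : nat) (t : nat -> R) (j : nat) : R :=
  if (j <=? n)%nat then t j else if (j =? S n)%nat then 0 else t (j - 1)%nat.

Section InsertNode.

Variables (n : nat) (t : nat -> R).
Hypothesis t_incr : forall i j, (1 <= i)%nat -> (i < j)%nat -> (j <= 2 * n)%nat -> t i < t j.
Hypothesis t_straddle : t n < 0 < t (S n).

Lemma insert_node_le j : (j <= n)%nat -> insert_node n t j = t j.
Proof. intro H. unfold insert_node. apply Nat.leb_le in H. rewrite H. reflexivity. Qed.

Lemma insert_node_mid : insert_node n t (S n) = 0.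
Proof.
  unfold insert_node. replace (S n <=? n)%nat with false by (symmetry; apply Nat.leb_gt; lia).
  rewrite Nat.eqb_refl. reflexivity.
Qed.

Lemma insert_node_gt j : (S (S n) <= j)%nat -> insert_node n t j = t (j - 1)%nat.
Proof.
  intro H. unfold insert_node.
  replace (j <=? n)%nat with false by (symmetry; apply Nat.leb_gt; lia).
  replace (j =? S n)%nat with false by (symmetry; apply Nat.eqb_neq; lia). reflexivity.
Qed.

Lemma insert_node_incr i j : (1 <= i)%nat -> (i < j)%nat -> (j <= 2 * n + 1)%nat ->
  insert_node n t i < insert_node n t j.
Proof.
  intros Hi Hij Hj. pose proof (strict_incr_le (2 * n) t t_incr) as Hle.
  destruct (le_lt_dec j n); [rewrite !insert_node_le by lia; apply t_incr; lia|].
  destruct (le_lt_dec i n).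
  - rewrite insert_node_le by lia. destruct (Nat.eq_dec j (S n)) as [->|].
    + rewrite insert_node_mid. pose proof (Hle i n ltac:(lia) ltac:(lia) ltac:(lia)). lra.
    + rewrite insert_node_gt by lia. apply t_incr; lia.
  - rewrite (insert_node_gt j) by lia. destruct (Nat.eq_dec i (S n)) as [->|].
    + rewrite insert_node_mid.
      pose proof (Hle (S n) (j - 1)%nat ltac:(lia) ltac:(lia) ltac:(lia)). lra.
    + rewrite insert_node_gt by lia. apply t_incr; lia.
Qed.

Lemma insert_node_interval_neg j x : (j <= n)%nat ->
  node_interval (2 * n + 1) (insert_node n t) j x -> x < 0 /\ node_interval (2 * n) t j x.
Proof.
  intros Hj [HL [HR|HR]]; [lia|].
  assert (HL' : j = 0%nat \/ t j < x) by (rewrite insert_node_le in HL by lia; exact HL).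
  destruct (Nat.eq_dec j n) as [->|].
  - rewrite insert_node_mid in HR. split; [lra|]. split; [exact HL'|right; lra].
  - rewrite insert_node_le in HR by lia.
    pose proof (strict_incr_le (2 * n) t t_incr (S j) n ltac:(lia) ltac:(lia) ltac:(lia)).
    split; [lra|]. split; [exact HL'|right; exact HR].
Qed.

Lemma insert_node_interval_pos j x : (n < j)%nat -> (j <= 2 * n + 1)%nat ->
  node_interval (2 * n + 1) (insert_node n t) j x -> 0 < x /\ node_interval (2 * n) t (j - 1) x.
Proof.
  intros Hj HjN [[HL|HL] HR]; [lia|].
  assert (HR' : (j - 1 = 2 * n)%nat \/ x < t (S (j - 1))).
  { destruct HR as [HR|HR]; [left; lia|right].
    rewrite insert_node_gt in HR by lia. replace (S (j - 1)) with (S j - 1)%nat by lia. exact HR. }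
  destruct (Nat.eq_dec j (S n)) as [->|].
  - rewrite insert_node_mid in HL. split; [lra|].
    split; [right; replace (S n - 1)%nat with n by lia; lra|exact HR'].
  - rewrite insert_node_gt in HL by lia.
    pose proof (strict_incr_le (2 * n) t t_incr (S n) (j - 1) ltac:(lia) ltac:(lia) ltac:(lia)).
    split; [lra|]. split; [right; exact HL|exact HR'].
Qed.

End InsertNode.

Lemma sum_insert_node n t (G : R -> R) :
  sum_n_m (fun j => (-1) ^ (2 * n + 1 - j) * G (insert_node n t j)) 1 (2 * n + 1) =
  sum_n_m (fun m => (-1) ^ (m + 1) * G (t m)) 1 n + (-1) ^ n * G 0
  + sum_n_m (fun m => (-1) ^ m * G (t m)) (n + 1) (2 * n).
Proof.
  set (f := fun j => (-1) ^ (2 * n + 1 - j) * G (insert_node n t j)).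
  rewrite (sum_n_m_Chasles f 1 n (2 * n + 1)) by lia.
  rewrite (sum_Sn_m f (S n)) by lia.
  replace (2 * n + 1)%nat with (S (2 * n)) by lia. rewrite <- sum_n_m_S.
  change plus with Rplus. rewrite Rplus_assoc.
  f_equal; [|f_equal].
  - apply sum_n_m_ext_loc. intros k Hk. unfold f. rewrite insert_node_le by lia.
    replace (2 * n + 1 - k)%nat with ((k + 1) + 2 * (n - k))%nat by lia.
    rewrite pow_m1_add_even. reflexivity.
  - unfold f. rewrite insert_node_mid. replace (2 * n + 1 - S n)%nat with n by lia. reflexivity.
  - replace (n + 1)%nat with (S n) by lia.
    apply sum_n_m_ext_loc. intros k Hk. unfold f. rewrite insert_node_gt by lia.
    replace (S k - 1)%nat with k by lia.
    replace (2 * n + 1 - S k)%nat with (2 * n - k)%nat by lia.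
    rewrite pow_m1_sub, pow_m1_add_even by lia. reflexivity.
Qed.

Lemma pow_opp_odd_neg x n : (1 <= n)%nat -> (- x) ^ (2 * n - 1) = - x ^ (2 * n - 1).
Proof.
  intro H. replace (- x) with (-1 * x) by ring. rewrite Rpow_mult_distr.
  replace (2 * n - 1)%nat with (S (2 * (n - 1))) at 1 by lia. rewrite pow_1_odd. ring.
Qed.

Section EvenAbsMoment.

Variables (n : nat) (t : nat -> R).
Hypothesis n_pos : (1 <= n)%nat.
Hypothesis t_zeros : zeros_enum (hermiteH (2 * n)) (2 * n) t.

Lemma hermiteH_even_zeros_straddle_0 : t n < 0 < t (S n).
Proof.
  apply (zeros_enum_straddle_0 n t (hermiteH (2 * n))); auto.
  intros x Hx. rewrite hermiteH_rec in *. rewrite hermite_rec_opp, Hx. ring.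
Qed.

(* On the refined partition the sign alternates: at [0] the factor [|x|^(2n-1)] changes
   sign while [h_(2n)] does not. *)
Lemma abs_moment_alternating j x : (j <= 2 * n + 1)%nat ->
  node_interval (2 * n + 1) (insert_node n t) j x ->
  Rabs x ^ (2 * n - 1) / INR (fact (2 * n - 1)) * Rabs (hermite_fun (2 * n) x) =
  (-1) ^ (2 * n + 1 - j) * (x ^ (2 * n - 1) * / INR (fact (2 * n - 1)) * hermite_fun (2 * n) x).
Proof.
  intros Hj Hx. pose proof hermiteH_even_zeros_straddle_0 as Hs.
  destruct (le_lt_dec j n) as [Hjn|Hjn].
  - destruct (insert_node_interval_neg n t (proj1 t_zeros) Hs j x Hjn Hx) as [Hx0 Hx'].
    rewrite (Rabs_hermite_fun_node_interval (2 * n) t j x), Rabs_left, pow_opp_odd_neg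
      by (auto; lia).
    replace (2 * n + 1 - j)%nat with (S (2 * n - j)) by lia. rewrite pow_m1_S.
    unfold Rdiv. ring.
  - destruct (insert_node_interval_pos n t (proj1 t_zeros) Hs j x Hjn Hj Hx) as [Hx0 Hx'].
    rewrite (Rabs_hermite_fun_node_interval (2 * n) t (j - 1) x), Rabs_right by (auto; lia || lra).
    replace (2 * n + 1 - j)%nat with (2 * n - (j - 1))%nat by lia.
    unfold Rdiv. ring.
Qed.

End EvenAbsMoment.

Lemma even_abs_moment_abs_hermite_fun n t : (1 <= n)%nat ->
  zeros_enum (hermiteH (2 * n)) (2 * n) t ->
  is_integral_R
    (fun x => Rabs x ^ (2 * n - 1) / INR (fact (2 * n - 1)) * Rabs (hermite_fun (2 * n) x))
    (/ INR (fact (2 * n)) *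
       sum_n_m (fun m => (-1) ^ (m + 1) *
         sum_n_m (fun k => / 2 ^ k * t m ^ (2 * n - 1 - k)
                            * hermite_fun (2 * n - 1 - k) (t m)) 0 (2 * n - 1)) 1 n
     + (-1) ^ n / (INR (fact (2 * n)) * 2 ^ (2 * n - 1) * sqrt PI)
     + / INR (fact (2 * n)) *
       sum_n_m (fun m => (-1) ^ m *
         sum_n_m (fun k => / 2 ^ k * t m ^ (2 * n - 1 - k)
                            * hermite_fun (2 * n - 1 - k) (t m)) 0 (2 * n - 1))
         (n + 1) (2 * n)).
Proof.
  intros Hn HZ. set (M := (2 * n - 1)%nat).
  assert (HfN : INR (fact (2 * n)) = INR (S M) * INR (fact M)).
  { rewrite <- mult_INR, <- fact_simpl. unfold M. f_equal. f_equal. lia. }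
  assert (HNR : INR (S M) > 0) by (apply lt_0_INR; lia).
  pose proof (INR_fact_neq_0 M). pose proof sqrt_PI_gt0. pose proof (pow_lt 2 M ltac:(lra)).
  set (c := - / (2 * INR (fact (2 * n)))).
  set (G := fun x => c * hermite_moment_prim M x).
  replace (_ + _ + _) with
    (-2 * sum_n_m (fun j => (-1) ^ (2 * n + 1 - j) * G (insert_node n t j)) 1 (2 * n + 1)).
  - assert (HG : gauss_dominated G)
      by apply gauss_dominated_scal, gauss_dominated_hermite_moment_prim.
    destruct (gauss_dominated_lim G HG).
    apply (is_integral_R_alternating (2 * n + 1) (insert_node n t) _ G
             (fun x => x ^ M * / INR (fact M) * hermite_fun (2 * n) x)); auto.
    + apply insert_node_incr; [apply HZ|apply hermiteH_even_zeros_straddle_0; auto].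
    + intro x. unfold G, c. replace (2 * n)%nat with (S M) by (unfold M; lia).
      replace (x ^ M * / INR (fact M) * hermite_fun (S M) x)
        with (- / (2 * INR (fact (S M))) * (-2 * INR (S M) * x ^ M * hermite_fun (S M) x))
        by (rewrite fact_simpl, mult_INR; field; lra).
      apply is_derive_scal, is_derive_hermite_moment_prim.
    + intro x. apply continuous_pow_hermite_fun.
    + intros j x Hj Hx. apply (abs_moment_alternating n t); auto.
    + lia.
  - assert (Hprim : forall (s : nat -> R) a b,
      sum_n_m (fun m => s m * sum_n_m (fun k => / 2 ^ k * t m ^ (M - k)
                                         * hermite_fun (M - k) (t m)) 0 M) a b
      = sum_n_m (fun m => s m * hermite_moment_prim M (t m)) a b).
    { intros s a b. apply sum_n_m_ext. intro m. rewrite hermite_moment_prim_sum. reflexivity. }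
    assert (Hscal : forall (s u : nat -> R) a b,
      sum_n_m (fun m => s m * (c * u m)) a b = c * sum_n_m (fun m => s m * u m) a b).
    { intros s u a b. rewrite <- sum_n_m_Rmult_l. apply sum_n_m_ext. intro m. as_R_eq. ring. }
    rewrite (Hprim (fun m => (-1) ^ (m + 1))), (Hprim (fun m => (-1) ^ m)).
    rewrite sum_insert_node. unfold G. rewrite hermite_moment_prim_0.
    rewrite (Hscal (fun m => (-1) ^ (m + 1))), (Hscal (fun m => (-1) ^ m)).
    unfold c. field. rewrite HfN. repeat split; try lra. apply Rmult_integral_contrapositive; lra.
Qed.

Theorem corollary3p4 (n : nat) (hn : (1 <= n)%nat) :
  (forall t : nat -> R, zeros_enum (hermiteH n) n t ->
     is_integral_R (fun x => Rabs (hermite_fun n x))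
       (/ INR n * sum_n_m (fun m => (-1) ^ (m + n) * hermite_fun (n - 1) (t m)) 1 n))
  /\
  (forall t : nat -> R, zeros_enum (hermiteH (2 * n + 1)) (2 * n + 1) t ->
     is_integral_R
       (fun x => x ^ (2 * n) / INR (fact (2 * n)) * Rabs (hermite_fun (2 * n + 1) x))
       (/ INR (fact (2 * n + 1)) *
        sum_n_m (fun m => (-1) ^ (m + 1) *
          sum_n_m (fun k => / 2 ^ k * t m ^ (2 * n - k) * hermite_fun (2 * n - k) (t m))
            0 (2 * n)) 1 (2 * n + 1)))
  /\
  (forall t : nat -> R, zeros_enum (hermiteH (2 * n)) (2 * n) t ->
     is_integral_R
       (fun x => Rabs x ^ (2 * n - 1) / INR (fact (2 * n - 1)) * Rabs (hermite_fun (2 * n) x))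
       (/ INR (fact (2 * n)) *
          sum_n_m (fun m => (-1) ^ (m + 1) *
            sum_n_m (fun k => / 2 ^ k * t m ^ (2 * n - 1 - k)
                               * hermite_fun (2 * n - 1 - k) (t m)) 0 (2 * n - 1)) 1 n
        + (-1) ^ n / (INR (fact (2 * n)) * 2 ^ (2 * n - 1) * sqrt PI)
        + / INR (fact (2 * n)) *
          sum_n_m (fun m => (-1) ^ m *
            sum_n_m (fun k => / 2 ^ k * t m ^ (2 * n - 1 - k)
                               * hermite_fun (2 * n - 1 - k) (t m)) 0 (2 * n - 1))
            (n + 1) (2 * n))).
Proof.
  split; [|split]; intros t HZ.
  - exact (hermite_fun_L1 n t hn HZ).
  - exact (odd_moment_abs_hermite_fun n t HZ).
  - exact (even_abs_moment_abs_hermite_fun n t hn HZ).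
Qed.
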